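(* Let $\mathfrak{A}$ be a $(\circ,\wedge,\mathsf{A})$-algebra that is representable by partial functions and atomic. Let $\varphi$ be the first-order sentence asserting: for all $a,b,c$, if $a\circ x\le c$ for every atom $x$ with $x\le b$, then $a\circ b\le c$. Then composition in $\mathfrak{A}$ is completely left-distributive over joins if and only if $\mathfrak{A}\models\varphi$.
   Context: A $(\circ,\wedge,\mathsf{A})$-algebra is a set with two binary operations $\circ,\wedge$ and one unary operation $\mathsf{A}$. An algebra of partial functions of this signature is a set of partial functions, with base $X$ the union of all their domains and ranges, closed under: composition $f\circ g=\{(x,z)\mid \exists y\,(x,y)\in f,(y,z)\in g\}$; intersection; antidomain $\mathsf{A}(f)=\{(x,x)\mid x\in X, x\notin\mathrm{dom}(f)\}$. A representation by partial functions is an isomorphism onto such an algebra. The order is $a\le b\iff a\wedge b=a$, with least element $0=\mathsf{A}(a)\circ a$. An atom is a minimal nonzero element; $\mathfrak{A}$ is atomic if every nonzero element is above an atom. Composition is completely left-distributive over joins if for every $a\in\mathfrak{A}$ and every $S\subseteq\mathfrak{A}$ such that $\bigvee S$ exists, $\bigvee\{a\circ s\mid s\in S\}$ exists and equals $a\circ\bigvee S$. *)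

From Stdlib Require Import Classical.

Section Alg.
Variables (T : Type) (comp meet : T -> T -> T) (A : T -> T).

Definition le (a b : T) : Prop := meet a b = a.

(* least element 0 = A(a) o a; x is nonzero iff x <> A(x) o x
   (in a representable algebra A(a) o a does not depend on a) *)
Definition zero_of (a : T) : T := comp (A a) a.
Definition nonzero (x : T) : Prop := x <> zero_of x.

Definition atom (x : T) : Prop :=
  nonzero x /\ forall y, le y x -> nonzero y -> y = x.

Definition atomic : Prop :=
  forall a, nonzero a -> exists x, atom x /\ le x a.

Definition is_join (S : T -> Prop) (j : T) : Prop :=
  (forall s, S s -> le s j) /\ (forall u, (forall s, S s -> le s u) -> le j u).

Definition comp_complete_left_distributive : Prop :=
  forall (a : T) (S : T -> Prop) (j : T), is_join S j ->
    is_join (fun y => exists s, S s /\ y = comp a s) (comp a j).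

Definition phi : Prop :=
  forall a b c : T,
    (forall x, atom x -> le x b -> le (comp a x) c) -> le (comp a b) c.

(* Representation by partial functions: an injective homomorphism h onto an
   algebra of partial functions (binary relations that are functional) on a
   set X, whose base is the union of domains and ranges. *)
Definition representation (X : Type) (h : T -> X -> X -> Prop) : Prop :=
  let base := fun x : X => exists a y, h a x y \/ h a y x in
  (forall a x y z, h a x y -> h a x z -> y = z) /\
  (forall a b, (forall x y, h a x y <-> h b x y) -> a = b) /\
  (forall a b x z, h (comp a b) x z <-> exists y, h a x y /\ h b y z) /\
  (forall a b x y, h (meet a b) x y <-> h a x y /\ h b x y) /\
  (forall a x y, h (A a) x y <-> x = y /\ base x /\ ~ (exists z, h a x z)).

Definition representable : Prop :=
  exists (X : Type) (h : T -> X -> X -> Prop), representation X h.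

End Alg.

From Pilot Require Import Defs.
From Stdlib Require Import Classical.

(* In a representation every element is a partial function and the order is
   inclusion of graphs, so an atom is determined by any one of its pairs: an
   element sharing a pair with an atom contains it.  Hence each atom below a
   join lies below a member of the family, and conversely b is the join of the
   atoms below it (outside that join, the restriction of b to the complement of
   its domain would be nonzero and contain an atom).  The first fact makes
   [phi] yield complete left-distributivity; the second, fed to complete
   left-distributivity, yields [phi]. *)

Section PartialFunctionRepresentation.

Variables (T : Type) (comp meet : T -> T -> T) (A : T -> T).
Variables (X : Type) (h : T -> X -> X -> Prop).

Hypothesis h_functional : forall a x y z, h a x y -> h a x z -> y = z.
Hypothesis h_inj : forall a b, (forall x y, h a x y <-> h b x y) -> a = b.
Hypothesis h_comp : forall a b x z, h (comp a b) x z <-> exists y, h a x y /\ h b y z.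
Hypothesis h_meet : forall a b x y, h (meet a b) x y <-> h a x y /\ h b x y.
Hypothesis h_A : forall a x y, h (A a) x y <->
  x = y /\ (exists b z, h b x z \/ h b z x) /\ ~ (exists z, h a x z).

Local Notation le := (le T meet).
Local Notation nonzero := (nonzero T comp A).
Local Notation atom := (atom T comp meet A).

Lemma le_iff_subrel (a b : T) : le a b <-> (forall p q, h a p q -> h b p q).
Proof.
  unfold Defs.le; split.
  - intros E p q H. rewrite <- E in H. apply h_meet in H. tauto.
  - intros H. apply h_inj. intros p q. rewrite h_meet. firstorder.
Qed.

Lemma h_comp_antidomain (a b : T) (p q : X) :
  h (comp (A a) b) p q <-> h b p q /\ ~ (exists r, h a p r).
Proof.
  rewrite h_comp; split.
  - intros [y [Hy Hb]]. apply h_A in Hy as [-> [_ Hy]]. auto.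
  - intros [Hb Ha]. exists p. split; [|exact Hb].
    apply h_A. split; [reflexivity|split; [exists b, q; auto | exact Ha]].
Qed.

Lemma nonzero_iff_inhabited (x : T) : nonzero x <-> exists p q, h x p q.
Proof.
  unfold Defs.nonzero, zero_of; split.
  - intros Hx. apply NNPP. intros Hempty. apply Hx, h_inj. intros p q.
    rewrite h_comp_antidomain. split.
    + intros H. exfalso. apply Hempty. exists p, q. exact H.
    + intros [H _]. exfalso. apply Hempty. exists p, q. exact H.
  - intros [p [q H]] E. rewrite E, h_comp_antidomain in H.
    destruct H as [Hpq Hdom]. apply Hdom. exists q. exact Hpq.
Qed.

Lemma le_comp2l (a s t : T) : le s t -> le (comp a s) (comp a t).
Proof.
  rewrite !le_iff_subrel. intros Hst p q. rewrite !h_comp.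
  intros [y [H1 H2]]. eauto.
Qed.

Lemma atom_le_of_common_pair (x s : T) (p q : X) :
  atom x -> h x p q -> h s p q -> le x s.
Proof.
  intros [_ Hmin] Hx Hs. apply Hmin.
  - apply le_iff_subrel. intros p' q'. rewrite h_meet. tauto.
  - apply nonzero_iff_inhabited. exists p, q. apply h_meet. auto.
Qed.

Lemma atom_le_join_member (S : T -> Prop) (j x : T) :
  is_join T meet S j -> atom x -> le x j -> exists s, S s /\ le x s.
Proof.
  intros [Hub Hleast] Hx Hxj. apply NNPP. intros Hno.
  (* No member of [S] meets the domain of [x], so [j] avoids it as well. *)
  assert (Hj : le j (comp (A x) j)).
  { apply Hleast. intros s Hs. apply le_iff_subrel. intros p q Hspq.
    assert (Hjpq : h j p q) by (apply (le_iff_subrel s j); auto).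
    apply h_comp_antidomain. split; [exact Hjpq|]. intros [z Hxz].
    assert (z = q).
    { apply (h_functional j p); [apply (le_iff_subrel x j) | ]; auto. }
    subst z. apply Hno. exists s. split; [exact Hs|].
    exact (atom_le_of_common_pair x s p q Hx Hxz Hspq). }
  destruct (proj1 (nonzero_iff_inhabited x) (proj1 Hx)) as [p [q Hpq]].
  assert (Hjpq : h j p q) by (apply (le_iff_subrel x j); auto).
  apply (proj1 (le_iff_subrel j _) Hj), h_comp_antidomain in Hjpq as [_ Hdom].
  eauto.
Qed.

Lemma comp_complete_left_distributive_of_phi :
  phi T comp meet A -> comp_complete_left_distributive T comp meet.
Proof.
  intros Hphi a S j Hj. split.
  - intros y [s [Hs ->]]. apply le_comp2l, (proj1 Hj), Hs.
  - intros u Hu. apply Hphi. intros x Hx Hxj.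
    destruct (atom_le_join_member S j x Hj Hx Hxj) as [s [Hs Hxs]].
    specialize (Hu (comp a s) (ex_intro _ s (conj Hs eq_refl))).
    rewrite le_iff_subrel in Hu |- *. intros p q Hp.
    apply Hu, (proj1 (le_iff_subrel _ _) (le_comp2l a x s Hxs)), Hp.
Qed.

Hypothesis Hatomic : atomic T comp meet A.

Lemma is_join_atoms_below (b : T) :
  is_join T meet (fun x => atom x /\ le x b) b.
Proof.
  split; [intros s [_ Hs]; exact Hs|].
  intros u Hu. apply le_iff_subrel. intros p q Hb. apply NNPP. intros Hu_pq.
  set (d := comp (A (meet b u)) b).
  assert (Hd_pq : h d p q).
  { apply h_comp_antidomain. split; [exact Hb|]. intros [z Hz].
    apply h_meet in Hz as [Hbz Huz].
    rewrite (h_functional b p z q Hbz Hb) in Huz. contradiction. }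
  assert (Hdb : le d b).
  { apply le_iff_subrel. intros p' q'. unfold d.
    rewrite h_comp_antidomain. tauto. }
  destruct (Hatomic d) as [x [Hx Hxd]].
  { apply nonzero_iff_inhabited. eauto. }
  assert (Hxb : le x b).
  { rewrite le_iff_subrel in Hdb, Hxd |- *. auto. }
  assert (Hxu : le x u) by (apply Hu; auto).
  destruct (proj1 (nonzero_iff_inhabited x) (proj1 Hx)) as [p' [q' Hx_pq]].
  pose proof (proj1 (le_iff_subrel x d) Hxd p' q' Hx_pq) as Hd_pq'.
  apply h_comp_antidomain in Hd_pq' as [_ Hdom]. apply Hdom. exists q'. apply h_meet.
  split; [apply (le_iff_subrel x b) | apply (le_iff_subrel x u)]; auto.
Qed.

Lemma phi_of_comp_complete_left_distributive :
  comp_complete_left_distributive T comp meet -> phi T comp meet A.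
Proof.
  intros Hcld a b c Hc.
  destruct (Hcld a _ b (is_join_atoms_below b)) as [_ Hleast].
  apply Hleast. intros y [x [[Hx Hxb] ->]]. auto.
Qed.

End PartialFunctionRepresentation.

Theorem mainTheorem15 (T : Type) (comp meet : T -> T -> T) (A : T -> T) :
  representable T comp meet A ->
  atomic T comp meet A ->
  (comp_complete_left_distributive T comp meet <-> phi T comp meet A).
Proof.
  intros [X [h [Hfun [Hinj [Hcomp [Hmeet HA]]]]]] Hatomic. split.
  - exact (phi_of_comp_complete_left_distributive T comp meet A X h
             Hfun Hinj Hcomp Hmeet HA Hatomic).
  - exact (comp_complete_left_distributive_of_phi T comp meet A X h
             Hfun Hinj Hcomp Hmeet HA).
Qed.
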